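(* Let $n\ge3$ and $R$ an associative ring with identity. Then $E_n(R)$ is normally generated by a subgroup isomorphic to $A_{n+1}$, namely the image of $A_{n+1}<\mathrm{SAut}(F_n)$ under $\mathrm{SAut}(F_n)\to\mathrm{SL}_n(\mathbb{Z})=E_n(\mathbb{Z})\to E_n(R)$, the last map induced by the ring map $\mathbb{Z}\to R$.
   Context: $E_n(R)$ is the subgroup of $\mathrm{GL}_n(R)$ generated by the elementary matrices $e_{ij}(r)$ ($1\le i\ne j\le n$, $r\in R$) with $1$'s on the diagonal, $r$ at $(i,j)$, zeros elsewhere. The subgroup $A_{n+1}<\mathrm{SAut}(F_n)$: with $F_n=\langle a_1,\dots,a_n\rangle$, $\sigma_{ij}$ ($1\le i\ne j\le n$) swaps $a_i,a_j$, and $\sigma_{i,n+1}$ sends $a_i\mapsto a_i^{-1}$, $a_j\mapsto a_ja_i^{-1}$ ($j\neq i$); these generate $S_{n+1}$ and $A_{n+1}$ is its even part. The map $\mathrm{SAut}(F_n)\to\mathrm{SL}_n(\mathbb{Z})$ is induced by the action on $F_n^{ab}=\mathbb{Z}^n$, and it is injective on this $A_{n+1}$. *)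

From HB Require Import structures.
From mathcomp Require Import all_boot all_order all_algebra all_fingroup.
Set Implicit Arguments. Unset Strict Implicit. Unset Printing Implicit Defensive.
Import GRing.Theory.
Local Open Scope ring_scope.

Definition elem_mx (R : nzRingType) (n : nat) (i j : 'I_n) (r : R) : 'M[R]_n :=
  1%:M + r *: delta_mx i j.

Inductive gen_group (R : nzRingType) (n : nat) (S : 'M[R]_n -> Prop) : 'M[R]_n -> Prop :=
  | gen_one : gen_group S 1%:M
  | gen_base x : S x -> gen_group S x
  | gen_mul x y : gen_group S x -> gen_group S y -> gen_group S (x *m y)
  | gen_inv x y : gen_group S x -> x *m y = 1%:M -> y *m x = 1%:M -> gen_group S y.

Definition En (R : nzRingType) (n : nat) : 'M[R]_n -> Prop :=
  gen_group (fun M => exists i j : 'I_n, exists r : R, i != j /\ M = elem_mx i j r).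

Inductive normal_closure (R : nzRingType) (n : nat) (G S : 'M[R]_n -> Prop)
  : 'M[R]_n -> Prop :=
  | nc_one : normal_closure G S 1%:M
  | nc_base x : S x -> normal_closure G S x
  | nc_mul x y : normal_closure G S x -> normal_closure G S y ->
                 normal_closure G S (x *m y)
  | nc_inv x y : normal_closure G S x -> x *m y = 1%:M -> y *m x = 1%:M ->
                 normal_closure G S y
  | nc_conj x g h : normal_closure G S x -> G g -> g *m h = 1%:M -> h *m g = 1%:M ->
                 normal_closure G S (g *m x *m h).

(* Image in SL_n(Z) (acting on F_n^ab = Z^n, columns = images of basis vectors)
   of the automorphism sigma_{ij} of F_n, indices in 'I_n.+1 where the last
   index ord_max plays the role of n+1:
   - for i, j <= n: sigma_ij swaps a_i, a_j  -> permutation matrix;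
   - sigma_{m,n+1}: a_m -> a_m^{-1}, a_l -> a_l a_m^{-1}  -> row m all -1,
     other rows as the identity. *)
Definition sigma_int (n : nat) (i j : 'I_n.+1) : 'M[int]_n :=
  \matrix_(k < n, l < n)
    (if ((val i < n) && (val j < n))%N then
      ((val k == (if val l == val i then val j
                  else if val l == val j then val i else val l)) : int)
    else
      let m := if (val i < n)%N then val i else val j in
      if val k == m then -1 else ((k == l) : int)).

Definition sigma_mx (R : nzRingType) (n : nat) (i j : 'I_n.+1) : 'M[R]_n :=
  map_mx (fun z : int => z%:~R) (sigma_int i j).

(* Let S_(n+1) act on Z^(n+1) / Z(1, ..., 1) = Z^n; this representation sends the
   transposition (i j) to the image of sigma_ij, and it is faithful as soon as n >= 2.
   An even permutation is a product of 3-cycles (a c n) through the extra point n,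
   and the image of such a 3-cycle is the Weyl element e_ac(1) e_ca(-1) e_ac(1)
   followed by row operations, hence lies in E_n(R).
   Conversely, for distinct i, j, k the image s of the even permutation (i n)(j k)
   satisfies s e_ij(-r) s = e_ik(r), so
     e_ij(r) = e_jk(1) (e_ij(r) s e_ij(-r) s) e_jk(-1)
   lies in the normal closure of s in E_n(R); finding k is where n >= 3 is used. *)

From HB Require Import structures.
From mathcomp Require Import all_boot all_order all_algebra all_fingroup.
Set Implicit Arguments.
Unset Strict Implicit.
Unset Printing Implicit Defensive.
Import GRing.Theory.
Local Open Scope ring_scope.

Lemma exists_notin (T : finType) (s : seq T) : (size s < #|T|)%N -> exists x, x \notin s.
Proof.
move=> lt_s_T; case: (pickP (predC (mem s))) => [x sx|all_s]; first by exists x.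
suff : (#|T| <= size s)%N by rewrite leqNgt lt_s_T.
apply: leq_trans (card_size s); apply/subset_leq_card/subsetP => x _.
by have := all_s x; rewrite /= => /negbFE.
Qed.

Lemma sum_pred_indicator (R : nzRingType) (T : finType) (P : pred T) (v : T) :
  \sum_(x | P x) ((x == v)%:R : R) = (P v)%:R.
Proof.
case Pv: (P v); last by rewrite big1 // => x Px; case: eqP Px => // ->; rewrite Pv.
by rewrite (bigD1 v) //= eqxx big1 ?addr0 // => x /andP[_ /negbTE ->].
Qed.

Lemma lift_eq_max n (k : 'I_n) : (lift ord_max k == ord_max :> 'I_n.+1) = false.
Proof. by rewrite eq_sym (negbTE (neq_lift _ _)). Qed.

Definition tperm_max n (a : 'I_n) : {perm 'I_n.+1} := tperm (lift ord_max a) ord_max.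

(* Row k is the image of e_k, with e_n := -(e_0 + ... + e_(n-1)): the action of
   S_(n+1) on Z^(n+1) / Z(1, ..., 1) in the basis e_0, ..., e_(n-1). *)
Definition perm_rep (R : nzRingType) n (p : {perm 'I_n.+1}) : 'M[R]_n :=
  \matrix_(k, l) ((p (lift ord_max k) == lift ord_max l)%:R - (p (lift ord_max k) == ord_max)%:R).

Section PermRep.
Context {R : nzRingType}.
Variable n : nat.
Implicit Types (p q : {perm 'I_n.+1}) (k l : 'I_n).

Lemma perm_rep_lift p k c : p (lift ord_max k) = lift ord_max c ->
  forall l, perm_rep R p k l = (c == l)%:R.
Proof.
by move=> pk l; rewrite mxE pk (inj_eq (@lift_inj _ _)) lift_eq_max subr0.
Qed.

Lemma perm_rep_max p k : p (lift ord_max k) = ord_max -> forall l, perm_rep R p k l = -1.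
Proof. by move=> pk l; rewrite mxE pk eqxx (negbTE (neq_lift _ _)) sub0r. Qed.

Lemma sum_perm_lift_eq p y :
  \sum_(m < n) ((p (lift ord_max m) == y)%:R : R) = 1 - (p ord_max == y)%:R.
Proof.
have sum1 : \sum_(x < n.+1) ((p x == y)%:R : R) = 1.
  rewrite (bigD1 (p^-1 y)%g) //= permKV eqxx big1 ?addr0 // => x xy.
  by rewrite (_ : p x == y = false) //; apply: contraNF xy => /eqP <-; rewrite permK.
by rewrite -[X in _ = X - _]sum1 (bigD1_ord ord_max) //= addrC addrK.
Qed.

Lemma perm_repM p q : perm_rep R (p * q)%g = perm_rep R p *m perm_rep R q.
Proof.
apply/matrixP => k l; rewrite [LHS]mxE permM !mxE.
case: (unliftP ord_max (p (lift ord_max k))) => [c|] pk.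
- rewrite (bigD1 c) //= (perm_rep_lift pk) eqxx mul1r pk mxE big1 ?addr0 // => m mc.
  by rewrite (perm_rep_lift pk) eq_sym (negbTE mc) mul0r.
- under eq_bigr do rewrite (perm_rep_max pk) mulN1r mxE.
  rewrite pk sumrN sumrB !sum_perm_lift_eq.
  by rewrite !opprB [RHS]addrC addrA subrK.
Qed.

Lemma perm_rep1 : perm_rep R (1 : {perm 'I_n.+1})%g = 1%:M.
Proof.
by apply/matrixP => k l; rewrite (perm_rep_lift (perm1 _)) mxE eq_sym.
Qed.

Lemma perm_rep_eq1 p : (1 < n)%N -> perm_rep R p = 1%:M -> p = 1%g.
Proof.
move=> n_gt1 /matrixP p1.
have fix_lift k : p (lift ord_max k) = lift ord_max k.
  case: (unliftP ord_max (p (lift ord_max k))) => [c|] pk.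
    have := p1 k c; rewrite (perm_rep_lift pk) eqxx mxE.
    case: (eqVneq k c) pk => [-> //|kc _] /eqP.
    by rewrite oner_eq0.
  have [|l] := @exists_notin _ [:: k]; first by rewrite card_ord.
  rewrite mem_seq1 => lk; have := p1 k l.
  by rewrite (perm_rep_max pk) mxE eq_sym (negbTE lk) => /eqP; rewrite oppr_eq0 oner_eq0.
apply/permP => x; rewrite perm1; case: (unliftP ord_max x) => [k|] -> //.
case: (unliftP ord_max (p ord_max)) => [k pk|] //.
by move: (neq_lift ord_max k); rewrite -(inj_eq (@perm_inj _ p)) pk fix_lift eqxx.
Qed.

Lemma perm_rep_inj p q : (1 < n)%N -> perm_rep R p = perm_rep R q -> p = q.
Proof.
move=> n_gt1 pq; apply/eqP; rewrite eq_mulgV1; apply/eqP/(perm_rep_eq1 n_gt1).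
by rewrite perm_repM pq -perm_repM mulgV perm_rep1.
Qed.

Lemma perm_rep_tperm_lift i j k l :
  perm_rep R (tperm (lift ord_max i) (lift ord_max j)) k l = (tperm i j k == l)%:R.
Proof. by rewrite (perm_rep_lift (esym (inj_tperm i j k (@lift_inj _ ord_max)))). Qed.

Lemma perm_rep_tperm_max i k l :
  perm_rep R (tperm_max i) k l = if k == i then -1 else (k == l)%:R.
Proof.
case: (eqVneq k i) => [->|ki]; first by rewrite (perm_rep_max (tpermL _ _)).
have k_fixed : tperm_max i (lift ord_max k) = lift ord_max k.
  by rewrite tpermD ?neq_lift // (inj_eq (@lift_inj _ _)) eq_sym.
by rewrite (perm_rep_lift k_fixed).
Qed.

Lemma perm_rep_tperm (i j : 'I_n.+1) : i != j -> perm_rep R (tperm i j) = sigma_mx R i j.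
Proof.
move=> ij; apply/matrixP => k l; rewrite [RHS]mxE [in RHS]mxE.
have bump_n (x : 'I_n) : bump n x = x by rewrite /bump leqNgt ltn_ord.
case: (unliftP ord_max i) => [i'|] -> in ij *; case: (unliftP ord_max j) => [j'|] -> in ij *.
- rewrite perm_rep_tperm_lift /= !bump_n !ltn_ord pmulrn /=.
  rewrite (inj_eq (@lift_inj _ _)) in ij.
  rewrite (can2_eq (tpermK i' j') (tpermK i' j')).
  case: tpermP => [->|->|li lj]; rewrite ?eqxx //; first by rewrite ifN // eq_sym.
  by rewrite !ifN //; apply/eqP => /val_inj.
- rewrite perm_rep_tperm_max /= bump_n ltn_ord ltnn /=.
  by case: (eqVneq k i') => [->|ki]; rewrite ?eqxx ?mulrN1z // ifN ?pmulrn.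
- rewrite tpermC perm_rep_tperm_max /= bump_n ltn_ord ltnn /=.
  by case: (eqVneq k j') => [->|kj]; rewrite ?eqxx ?mulrN1z // ifN ?pmulrn.
- by rewrite eqxx in ij.
Qed.
End PermRep.

Lemma mul_scale_delta_mx (R : nzRingType) m n p (i : 'I_m) (j k : 'I_n) (l : 'I_p)
    (r s : R) :
  (r *: delta_mx i j) *m (s *: delta_mx k l) = (r * s) *: delta_mx i l *+ (j == k).
Proof.
apply/matrixP => a b; rewrite mxE (bigD1 j) //= big1 => [|c cj]; last first.
  by rewrite !mxE (negbTE cj) andbF mulr0 mul0r.
rewrite mulmxnE !mxE eqxx andbT addr0.
by case: (j == k); case: (a == i); case: (b == l);
  rewrite /= ?(mulr0, mul0r, mulr1, mul1r, mulr1n, mulr0n).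
Qed.

Section ElemMx.
Variables (R : nzRingType) (n : nat).
Implicit Types (i j k : 'I_n) (r s : R).

Lemma mulmx_scale_delta_entry m p (A : 'M[R]_(m, n)) i (j b : 'I_p) r a :
  (A *m (r *: delta_mx i j)) a b = A a i * r *+ (b == j).
Proof.
rewrite mxE (bigD1 i) //= big1 => [|c ci]; last by rewrite !mxE (negbTE ci) /= mulr0n !mulr0.
by rewrite !mxE eqxx addr0 /= mulr_natr; apply: mulrnAr.
Qed.

Lemma scale_delta_mulmx_entry m p (A : 'M[R]_(n, p)) (i a : 'I_m) j r b :
  ((r *: delta_mx i j) *m A) a b = r * A j b *+ (a == i).
Proof.
rewrite mxE (bigD1 j) //= big1 => [|c cj]; last by rewrite !mxE (negbTE cj) andbF mulr0 mul0r.
by rewrite !mxE eqxx andbT addr0 /= mulr_natr; apply: mulrnAl.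
Qed.

Lemma elem_mx0 i j : elem_mx i j (0 : R) = 1%:M.
Proof. by rewrite /elem_mx scale0r addr0. Qed.

Lemma elem_mxD i j r s : i != j -> elem_mx i j r *m elem_mx i j s = elem_mx i j (r + s).
Proof.
move=> ij; rewrite /elem_mx mulmxDl !mulmxDr !mul1mx mulmx1 mul_scale_delta_mx.
by rewrite eq_sym (negbTE ij) addr0 scalerDl addrA addrAC.
Qed.

Lemma elem_mxNK i j r : i != j -> elem_mx i j r *m elem_mx i j (- r) = 1%:M.
Proof. by move=> ij; rewrite elem_mxD // subrr elem_mx0. Qed.

Lemma elem_mxKN i j r : i != j -> elem_mx i j (- r) *m elem_mx i j r = 1%:M.
Proof. by move=> ij; rewrite elem_mxD // addNr elem_mx0. Qed.

Lemma elem_mx_conj_pair i j k r : i != j -> i != k -> j != k ->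
  elem_mx j k 1 *m (elem_mx i j r *m elem_mx i k r) *m elem_mx j k (-1) = elem_mx i j r.
Proof.
move=> ij ik jk; rewrite /elem_mx.
have ji : (j == i) = false by rewrite eq_sym (negbTE ij).
have ki : (k == i) = false by rewrite eq_sym (negbTE ik).
have kj : (k == j) = false by rewrite eq_sym (negbTE jk).
rewrite !(mulmxDl, mulmxDr, mul1mx, mulmx1, mul_scale_delta_mx, ji, ki, kj, eqxx).
rewrite !(mulr0n, mulr1n, mulr1, mul1r, mulrN1, scale1r, scaleN1r, scaleNr).
rewrite !(mul0mx, mulmx0, addr0, add0r).
by rewrite addrA addrK addrAC addrK.
Qed.

Lemma elem_mx_mul_entry i j r (M : 'M[R]_n) u v :
  (elem_mx i j r *m M) u v = M u v + r * M j v *+ (u == i).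
Proof. by rewrite mulmxDl mul1mx mxE scale_delta_mulmx_entry. Qed.
End ElemMx.

Lemma En_elem (R : nzRingType) n (i j : 'I_n) (r : R) : i != j -> En (elem_mx i j r).
Proof. by move=> ij; apply: gen_base; exists i, j, r. Qed.

Lemma En_row_subtract (R : nzRingType) n (i : 'I_n) (s : seq 'I_n) (M : 'M[R]_n) :
  i \notin s -> En M -> En (\matrix_(u, v) (M u v - (\sum_(x <- s) M x v) *+ (u == i))).
Proof.
elim: s => [|x s IHs] /=; move=> iS EnM.
  suff -> : \matrix_(u, v) (M u v - (\sum_(x <- [::]) M x v) *+ (u == i)) = M by [].
  by apply/matrixP => u v; rewrite mxE big_nil mul0rn subr0.
rewrite inE negb_or in iS; case/andP: iS => ix iS.
suff -> : \matrix_(u, v) (M u v - (\sum_(y <- x :: s) M y v) *+ (u == i)) =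
    elem_mx i x (-1) *m \matrix_(u, v) (M u v - (\sum_(y <- s) M y v) *+ (u == i)).
  by apply: gen_mul; [exact: En_elem | exact: IHs].
apply/matrixP => u v; rewrite elem_mx_mul_entry !mxE big_cons (eq_sym x i) (negbTE ix).
by rewrite mulr0n subr0 mulN1r mulrnDl opprD addrA [LHS]addrAC mulNrn.
Qed.

Section EvenPermRep.
Variables (R : nzRingType) (n : nat).
Implicit Types (a c : 'I_n).

Lemma perm_rep_3cycle a c u v : a != c ->
  perm_rep R (tperm_max a * tperm_max c) u v =
    if u == c then -1 else if u == a then (c == v)%:R else (u == v)%:R.
Proof.
move=> ac; rewrite /tperm_max.
case: (eqVneq u c) => [->|uc].
  rewrite (perm_rep_max _ _) // permM [tperm _ _ (@lift n.+1 ord_max c)]tpermD ?tpermL ?neq_lift //.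
  by rewrite (inj_eq (@lift_inj _ _)).
case: (eqVneq u a) => [->|ua].
  have ac_image : (tperm_max a * tperm_max c)%g (lift ord_max a) = lift ord_max c.
    by rewrite permM tpermL tpermR.
  by rewrite (perm_rep_lift ac_image).
have u_fixed : (tperm_max a * tperm_max c)%g (lift ord_max u) = lift ord_max u.
  by rewrite permM !tpermD ?neq_lift // (inj_eq (@lift_inj _ _)) eq_sym.
by rewrite (perm_rep_lift u_fixed) eq_sym.
Qed.

Definition weyl_mx a c : 'M[R]_n := \matrix_(u, v)
  (if u == a then (v == c)%:R else if u == c then - (v == a)%:R else (u == v)%:R).

Lemma weyl_mxE a c : a != c ->
  weyl_mx a c = elem_mx a c 1 *m (elem_mx c a (-1) *m elem_mx a c 1).
Proof.
move=> ac; apply/matrixP => u v.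
rewrite !elem_mx_mul_entry !mxE eqxx (eq_sym c a) (negbTE ac).
rewrite /= !mul1r !mulN1r !mulr0n !addr0.
by repeat (case: eqP => [?|?]; subst; rewrite ?eqxx //= in ac * );
  rewrite ?(mulr0n, mulr1n, addr0, add0r, oppr0, subrr).
Qed.

Lemma En_weyl_mx a c : a != c -> En (weyl_mx a c).
Proof.
move=> ac; rewrite weyl_mxE //.
by apply: gen_mul; [|apply: gen_mul]; apply: En_elem; rewrite // eq_sym.
Qed.

Lemma En_3cycle a c : En (perm_rep R (tperm_max a * tperm_max c)).
Proof.
case: (eqVneq a c) => [->|ac]; first by rewrite tperm2 perm_rep1; exact: gen_one.
set W := weyl_mx a c.
suff -> : perm_rep R (tperm_max a * tperm_max c) = \matrix_(u, v)
    (W u v - (\sum_(x <- [seq x <- index_enum 'I_n | x != c]) W x v) *+ (u == c)).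
  by apply: En_row_subtract; [rewrite mem_filter eqxx | exact: En_weyl_mx].
apply/matrixP => u v; rewrite perm_rep_3cycle // mxE big_filter (bigD1 a) //=.
under eq_bigr => x /andP[xc xa] do rewrite mxE (negbTE xc) (negbTE xa).
rewrite sum_pred_indicator !mxE eqxx.
case: (eqVneq u c) => [->|uc]; last first.
  by rewrite mulr0n subr0; case: (eqVneq u a) => // _; rewrite eq_sym.
rewrite (eq_sym c a) (negbTE ac) mulr1n.
case: (eqVneq v a) => [->|va]; first by rewrite (negbTE ac) andbF /= mulr0n addr0 subr0.
by case: (eqVneq v c) => [_|vc] /=; rewrite ?mulr0n ?mulr1n oppr0 ?addr0 ?add0r.
Qed.

Lemma En_perm_rep_invg (p : {perm 'I_n.+1}) : En (perm_rep R p) -> En (perm_rep R p^-1).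
Proof.
move=> Ep; apply: (gen_inv Ep); by rewrite -perm_repM ?mulgV ?mulVg perm_rep1.
Qed.

Lemma tperm_lift (a b : 'I_n) : a != b ->
  tperm (lift ord_max a) (lift ord_max b) = (tperm_max a * tperm_max b * tperm_max a)%g.
Proof.
move=> ab; rewrite /tperm_max -mulgA -{1}(tpermV (lift ord_max a) ord_max) -conjgE tpermJ tpermR.
rewrite tpermD ?neq_lift //; first exact: tpermC.
by rewrite (inj_eq (@lift_inj _ _)).
Qed.

Lemma En_tperm_mul_max c (x y : 'I_n.+1) : x != y -> En (perm_rep R (tperm x y * tperm_max c)).
Proof.
case: (unliftP ord_max x) => [a|] ->; case: (unliftP ord_max y) => [b|] -> xy.
- rewrite tperm_lift; last by rewrite -(inj_eq (@lift_inj _ ord_max)).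
  by rewrite -!mulgA mulgA perm_repM; apply: gen_mul; exact: En_3cycle.
- exact: En_3cycle.
- by rewrite tpermC; exact: En_3cycle.
- by rewrite eqxx in xy.
Qed.

Lemma En_perm_rep_even (p : {perm 'I_n.+1}) : (0 < n)%N -> ~~ odd_perm p -> En (perm_rep R p).
Proof.
(* Induct on a factorisation into transpositions t; the parity twist lets each
   step multiply by [t * tperm_max c] or its inverse, both of which lie in E_n(R). *)
move=> n_gt0; pose c := Ordinal n_gt0.
suff En_twisted : En (perm_rep R (tperm_max c ^+ odd_perm p * p)).
  by move/negbTE=> p_even; rewrite p_even mul1g in En_twisted.
have [ts -> {p}] := prod_tpermP p; elim: ts => [|t ts IHts] /=.
  by rewrite big_nil odd_perm1 expg0 mulg1 perm_rep1 => _; exact: gen_one.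
case/andP=> t_neq {}/IHts; rewrite big_cons odd_permM odd_tperm t_neq /=.
case: (odd_perm _) => /= En_ts; rewrite ?expg1 ?expg0 mul1g ?mulg1 in En_ts *.
- have -> : (tperm t.1 t.2 * \prod_(t <- ts) tperm t.1 t.2 =
      (tperm t.1 t.2 * tperm_max c) * (tperm_max c * \prod_(t <- ts) tperm t.1 t.2))%g.
    by rewrite -mulgA (mulgA (tperm_max c)) tperm2 mul1g.
  by rewrite perm_repM; apply: gen_mul => //; exact: En_tperm_mul_max.
- rewrite mulgA perm_repM; apply: gen_mul => //.
  have -> : (tperm_max c * tperm t.1 t.2 = (tperm t.1 t.2 * tperm_max c)^-1)%g.
    by rewrite invMg !tpermV.
  exact/En_perm_rep_invg/En_tperm_mul_max.
Qed.
End EvenPermRep.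

Section DoubleTransposition.
Variables (R : nzRingType) (n : nat) (i j k : 'I_n).
Hypotheses (ij : i != j) (ik : i != k) (jk : j != k).

Definition double_tperm : {perm 'I_n.+1} :=
  (tperm_max i * tperm (lift ord_max j) (lift ord_max k))%g.

Lemma odd_double_tperm : ~~ odd_perm double_tperm.
Proof.
by rewrite odd_permM !odd_tperm (inj_eq (@lift_inj _ _)) jk eq_sym (negbTE (neq_lift _ _)).
Qed.

Lemma double_tperm2 : (double_tperm * double_tperm = 1)%g.
Proof.
have commute_tperms : commute (tperm_max i)
                              (tperm (lift ord_max j) (lift ord_max k)).
  rewrite /commute conjgC tpermJ !tpermD // ?(inj_eq (@lift_inj _ _)) ?lift_eq_max //.
  1,2: by rewrite eq_sym.
by have := expgMn 2 commute_tperms; rewrite !expgS !expg0 !mulg1 !tperm2 mulg1.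
Qed.

Lemma double_tperm_lift a : a != i ->
  double_tperm (lift ord_max a) = lift ord_max (tperm j k a).
Proof.
move=> ai; rewrite permM [tperm _ ord_max _]tpermD ?neq_lift 1?(inj_eq (@lift_inj _ _)) 1?eq_sym //.
exact: esym (inj_tperm j k a (@lift_inj _ ord_max)).
Qed.

Lemma perm_rep_double_tperm_col a : perm_rep R double_tperm a i = - (a == i)%:R.
Proof.
case: (eqVneq a i) => [->|ai].
  by rewrite (perm_rep_max _ _) // permM tpermL tpermD ?lift_eq_max.
rewrite (perm_rep_lift (double_tperm_lift ai)) (can2_eq (tpermK j k) (tpermK j k)).
by rewrite tpermD ?(eq_sym j i) ?(eq_sym k i) // (negbTE ai) oppr0.
Qed.

Lemma perm_rep_double_tperm_row b : perm_rep R double_tperm j b = (k == b)%:R.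
Proof.
have ji : j != i by rewrite eq_sym.
by rewrite (perm_rep_lift (double_tperm_lift ji)) tpermL.
Qed.

Lemma double_tperm_conj_elem r :
  perm_rep R double_tperm *m elem_mx i j r *m perm_rep R double_tperm = elem_mx i k (- r).
Proof.
set s := perm_rep R double_tperm.
have s2 : s *m s = 1%:M by rewrite -perm_repM double_tperm2 perm_rep1.
have sD : s *m (r *: delta_mx i j) = - (r *: delta_mx i j).
  apply/matrixP => a b; rewrite mulmx_scale_delta_entry perm_rep_double_tperm_col.
  rewrite !mxE mulNr mulrnAl.
  by case: (a == i); case: (b == j);
    rewrite /= ?(mulr0n, mulr1n, mul0r, mul1r, mulr0, mulr1, oppr0).
have Ds : (r *: delta_mx i j) *m s = r *: delta_mx i k.
  apply/matrixP => a b.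
  rewrite scale_delta_mulmx_entry perm_rep_double_tperm_row [k == b]eq_sym !mxE.
  by case: (a == i); case: (b == k); rewrite /= ?(mulr0n, mulr1n, mulr0, mulr1).
by rewrite /elem_mx mulmxDr mulmx1 sD mulmxDl s2 mulNmx Ds -scaleNr.
Qed.
End DoubleTransposition.

Definition alt_image (R : nzRingType) n (M : 'M[R]_n) : Prop :=
  exists2 p : {perm 'I_n.+1}, ~~ odd_perm p & M = perm_rep R p.

Lemma elem_mx_normal_closure (R : nzRingType) n (i j : 'I_n) (r : R) :
  (2 < n)%N -> i != j -> normal_closure (@En R n) (@alt_image R n) (elem_mx i j r).
Proof.
move=> n_gt2 ij; have [|k] := @exists_notin _ [:: i; j]; first by rewrite card_ord.
rewrite !inE negb_or => /andP[ki kj].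
have ik : i != k by rewrite eq_sym.
have jk : j != k by rewrite eq_sym.
set s := perm_rep R (double_tperm i j k).
have s_in : normal_closure (@En R n) (@alt_image R n) s.
  by apply: nc_base; exists (double_tperm i j k); first exact: odd_double_tperm.
have conj_s := nc_conj s_in (En_elem r ij) (elem_mxNK r ij) (elem_mxKN r ij).
have := nc_conj (nc_mul conj_s s_in) (En_elem 1 jk) (elem_mxNK 1 jk) (elem_mxKN 1 jk).
have -> : elem_mx i j r *m s *m elem_mx i j (- r) *m s = elem_mx i j r *m elem_mx i k r.
  by rewrite -!mulmxA (mulmxA s) double_tperm_conj_elem // opprK.
by rewrite elem_mx_conj_pair.
Qed.

Theorem lemma5p2 (R : nzRingType) (n : nat) (hn : (3 <= n)%N) :
  exists f : {perm 'I_n.+1} -> 'M[R]_n,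
    (forall p q : {perm 'I_n.+1}, f (p * q)%g = f p *m f q) /\
    (forall i j : 'I_n.+1, i != j -> f (tperm i j) = sigma_mx R i j) /\
    (forall p q : {perm 'I_n.+1}, ~~ odd_perm p -> ~~ odd_perm q -> f p = f q -> p = q) /\
    (forall p : {perm 'I_n.+1}, ~~ odd_perm p -> En (f p)) /\
    (forall g : 'M[R]_n, En g ->
       normal_closure (@En R n)
         (fun M => exists2 p : {perm 'I_n.+1}, ~~ odd_perm p & M = f p) g).
Proof.
exists (@perm_rep R n); split; first exact: perm_repM.
split; first exact: perm_rep_tperm.
split; first by move=> p q _ _; apply: perm_rep_inj; exact: ltnW.
split; first by move=> p; apply: En_perm_rep_even; exact: leq_trans hn.
move=> g; elim=> [|_ [i [j [r [ij ->]]]]|x y _ Hx _ Hy|x y _ Hx xy yx].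
- exact: nc_one.
- exact: elem_mx_normal_closure.
- exact: nc_mul.
- exact: nc_inv Hx xy yx.
Qed.
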